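(* Let $m,n,N,\alpha\ge1$ be integers and let $\star\in\mathbf{Prod_+}(m,n;N)$ have rank $\alpha$. Then: (a) For all positive semidefinite $P\in\mathbb{C}^{m\times m}$ and $Q\in\mathbb{C}^{n\times n}$, $P\star Q\succcurlyeq0$. (b) Let $\mathcal Y(\star)=\sum_{k=1}^\alpha\mathcal Y_k$ be any decomposition with each $\mathcal Y_k$ positive semidefinite of rank one, write $\mathcal Y_k=(v_{i,k}v_{j,k}^* )_{i,j=1}^N$ with $v_{1,k},\dots,v_{N,k}\in\mathbb{C}^{mn}$, and let $\star_k$ be the product parameterized by $\mathcal Y_k$ (so $\star=\sum_k\star_k$). For every integer $\beta\ge1$ and all nonzero $A\in\mathbb{C}^{m\times\beta}$, $B\in\mathbb{C}^{n\times\beta}$, \[ AA^*\star BB^*\;\succcurlyeq\;\sum_{k=1}^\alpha\frac{1}{\min(\operatorname{rk}AA^*,\operatorname{rk}BB^*,\mathbf r(k))}\,\rho_k\rho_k^*\;\succcurlyeq\;0, \] where $\rho_k:=\big(\langle\mathrm{vec}(BA^T),v_{1,k}\rangle,\dots,\langle\mathrm{vec}(BA^T),v_{N,k}\rangle\big)^T\in\mathbb{C}^N$, $\mathcal U(k):=\operatorname{span}\{\mathrm{vec}^{-1}(v_{i,k}):i=1,\dots,N\}\subset\mathbb{C}^{n\times m}$ and $\mathbf r(k):=\max\{\operatorname{rk}X:X\in\mathcal U(k)\}$. In fact, for each $k$, $AA^*\star_kBB^*\succcurlyeq\frac{1}{\min(\operatorname{rk}AA^*,\operatorname{rk}BB^*,\mathbf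 r(k))}\rho_k\rho_k^*$. (c) For each fixed $k\in\{1,\dots,\alpha\}$ and each $\beta\ge1$, the coefficient $1/\min(\operatorname{rk}AA^*,\operatorname{rk}BB^*,\mathbf r(k))$ is best possible for $AA^*\star_kBB^*$: there exist nonzero $A\in\mathbb{C}^{m\times\beta}$, $B\in\mathbb{C}^{n\times\beta}$ and $u\in\mathbb{C}^N$ with $\rho_k^*u\ne0$ such that $u^*(AA^*\star_kBB^* )u=\frac{1}{\min(\operatorname{rk}AA^*,\operatorname{rk}BB^*,\mathbf r(k))}|\rho_k^*u|^2$; hence no larger constant works uniformly for all $A,B$.
   Context: Each $\mathbb{C}^{k_1\times k_2}$ carries the inner product $\langle A,B\rangle=\operatorname{tr}(AB^* )$; in particular on $\mathbb{C}^k$, $\langle x,y\rangle=y^*x$. Given $\mathcal{Y}=(Y_{ij})_{i,j=1}^N\in\mathbb{C}^{mnN\times mnN}$ with $Y_{ij}\in\mathbb{C}^{mn\times mn}$, the product $\star=\star(\mathcal Y):\mathbb{C}^{m\times m}\times\mathbb{C}^{n\times n}\to\mathbb{C}^{N\times N}$ is $A\star B:=(\operatorname{tr}((A\otimes B)Y_{ij}^* ))_{i,j=1}^N$ ($\otimes$ = Kronecker product). $\mathbf{Prod_+}(m,n;N)$ is the set of such products with $\mathcal Y$ positive semidefinite; the rank of $\star$ is $\operatorname{rk}\mathcal Y(\star)$. $\mathrm{vec}:\mathbb{C}^{n\times m}\to\mathbb{C}^{mn}$ stacks the columns of a matrix into a column vector, and $\mathrm{vec}^{-1}$ is its inverse.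 $X\succcurlyeq Y$ means $X-Y$ is positive semidefinite. *)

From HB Require Import structures.
From mathcomp Require Import all_boot all_order all_algebra.
Set Implicit Arguments. Unset Strict Implicit. Unset Printing Implicit Defensive.
Import Order.TTheory GRing.Theory Num.Theory.
Local Open Scope ring_scope.

(* Complex scalars: an arbitrary numClosedFieldType C (e.g. algC, or complex R). *)
Section Defs.
Variable C : numClosedFieldType.

Definition adj (p q : nat) (A : 'M[C]_(p, q)) : 'M[C]_(q, p) := (map_mx Num.conj A)^T.

Definition psd (p : nat) (A : 'M[C]_p) : Prop :=
  adj A = A /\ forall x : 'cV[C]_p, 0 <= (adj x *m A *m x) 0 0.

Definition loewner_ge (p : nat) (X Y : 'M[C]_p) : Prop := psd (X - Y).

(* Kronecker product; row/column index (i1,i2) is mxvec_index i1 i2 = i1*p2 + i2 *)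
Definition kron (p1 q1 p2 q2 : nat) (A : 'M[C]_(p1, q1)) (B : 'M[C]_(p2, q2))
  : 'M[C]_(p1 * p2, q1 * q2) :=
  \sum_(i1 < p1) \sum_(j1 < q1) \sum_(i2 < p2) \sum_(j2 < q2)
     (A i1 j1 * B i2 j2) *: delta_mx (mxvec_index i1 i2) (mxvec_index j1 j2).

(* vec : C^{n x m} -> C^{mn}, stacking columns: entry (i,j) goes to index j*n+i *)
Definition vec (n m : nat) (X : 'M[C]_(n, m)) : 'cV[C]_(m * n) := (mxvec X^T)^T.

Definition vec_inv (n m : nat) (v : 'cV[C]_(m * n)) : 'M[C]_(n, m) := (vec_mx v^T)^T.

Definition block (N k : nat) (Y : 'M[C]_(N * k)) (i j : 'I_N) : 'M[C]_k :=
  \matrix_(p, q) Y (mxvec_index i p) (mxvec_index j q).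

Definition starY (m n N : nat) (Y : 'M[C]_(N * (m * n)))
  (A : 'M[C]_m) (B : 'M[C]_n) : 'M[C]_N :=
  \matrix_(i, j) \tr (kron A B *m adj (block Y i j)).

Definition is_max_rank_span (N n m : nat) (S : 'I_N -> 'M[C]_(n, m)) (r : nat) : Prop :=
  (exists c : 'I_N -> C, \rank ((\sum_i c i *: S i)%R) = r) /\
  (forall c : 'I_N -> C, (\rank ((\sum_i c i *: S i)%R) <= r)%N).

Definition rho (m n N b : nat) (v : 'I_N -> 'cV[C]_(m * n))
  (A : 'M[C]_(m, b)) (B : 'M[C]_(n, b)) : 'cV[C]_N :=
  \col_i (adj (v i) *m vec (B *m A^T)) 0 0.

Definition coef (m n b : nat) (A : 'M[C]_(m, b)) (B : 'M[C]_(n, b)) (r : nat) : C :=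
  ((minn (\rank (A *m adj A)) (minn (\rank (B *m adj B)) r))%:R)^-1.

End Defs.

From HB Require Import structures.
From mathcomp Require Import all_boot all_order all_algebra.
From mathcomp Require Import ring.
Import Order.TTheory GRing.Theory Num.Theory.
Local Open Scope ring_scope.

Set Implicit Arguments. Unset Strict Implicit. Unset Printing Implicit Defensive.

(* If the blocks of Y factor as Y_ij = sum_t L_ti L_tj^*, then
   u^*(P star Q)u = sum_t w_t^*(P (x) Q)w_t with w_t = sum_j u_j L_tj.  For P = FF^*
   and Q = GG^*, the identity (F (x) G) vec X = vec (G X F^T) turns each term into
   the squared Frobenius norm of Z_t = G^* vec^-1(w_t) conj(F); this gives (a).
   For a rank-one Y_k there is a single Z, its trace is rho_k^* u and its rank is
   at most min(rk AA^*, rk BB^*, r(k)), so (b) is the Cauchy-Schwarz bound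
   |tr Z|^2 <= rk Z tr(Z Z^* ).  Choosing A, B as matrix units at a nonzero entry of
   some vec^-1(v_i) makes all these ranks 1 and the bound an equality: this is (c). *)

Section Adjoint.
Variable C : numClosedFieldType.

Lemma adjE p q (A : 'M[C]_(p, q)) i j : adj A i j = (A j i)^*.
Proof. by rewrite /adj !mxE. Qed.

Lemma adjK p q (A : 'M[C]_(p, q)) : adj (adj A) = A.
Proof. by apply/matrixP=> i j; rewrite !adjE conjCK. Qed.

Lemma adjM p q r (A : 'M[C]_(p, q)) (B : 'M[C]_(q, r)) :
  adj (A *m B) = adj B *m adj A.
Proof.
apply/matrixP=> i j; rewrite adjE !mxE rmorph_sum; apply: eq_bigr => k _.
by rewrite !adjE rmorphM mulrC.
Qed.

Lemma adjD p q (A B : 'M[C]_(p, q)) : adj (A + B) = adj A + adj B.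
Proof. by apply/matrixP=> i j; rewrite !(adjE, mxE) rmorphD. Qed.

Lemma adjB p q (A B : 'M[C]_(p, q)) : adj (A - B) = adj A - adj B.
Proof. by apply/matrixP=> i j; rewrite !(adjE, mxE) rmorphB. Qed.

Lemma adj_scale p q c (A : 'M[C]_(p, q)) : adj (c *: A) = c^* *: adj A.
Proof. by apply/matrixP=> i j; rewrite !(adjE, mxE) rmorphM. Qed.

Lemma adj_sum p q I (r : seq I) (P : pred I) (F : I -> 'M[C]_(p, q)) :
  adj (\sum_(i <- r | P i) F i) = \sum_(i <- r | P i) adj (F i).
Proof.
apply/matrixP=> i j; rewrite adjE !summxE rmorph_sum; apply: eq_bigr => k _.
by rewrite adjE.
Qed.

Lemma mxtrace_adj p (A : 'M[C]_p) : \tr (adj A) = (\tr A)^*.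
Proof. by rewrite /mxtrace rmorph_sum; apply: eq_bigr => i _; rewrite adjE. Qed.

Lemma adj_trmx p q (A : 'M[C]_(p, q)) : adj A^T = map_mx Num.conj A.
Proof. by apply/matrixP=> i j; rewrite adjE !mxE. Qed.

Lemma trmx_adj p q (A : 'M[C]_(p, q)) : (adj A)^T = map_mx Num.conj A.
Proof. by apply/matrixP=> i j; rewrite mxE adjE mxE. Qed.

Lemma adj_map_conj p q (A : 'M[C]_(p, q)) : adj (map_mx Num.conj A) = A^T.
Proof. by apply/matrixP=> i j; rewrite adjE !mxE conjCK. Qed.

Lemma adj_delta p q (i : 'I_p) (j : 'I_q) :
  adj (delta_mx i j : 'M[C]_(p, q)) = delta_mx j i.
Proof. by apply/matrixP=> x y; rewrite adjE !mxE rmorph_nat andbC. Qed.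

Lemma map_conj_delta p q (i : 'I_p) (j : 'I_q) :
  map_mx Num.conj (delta_mx i j : 'M[C]_(p, q)) = delta_mx i j.
Proof. by apply/matrixP=> x y; rewrite !mxE rmorph_nat. Qed.

Lemma tstar_adj p q (A : 'M[C]_(p, q)) : (A ^t* )%sesqui = adj A.
Proof. by apply/matrixP=> i j; rewrite adjE !mxE. Qed.

Lemma delta_mx_sandwich k l p q (X : 'M[C]_(p, q)) (a : 'I_k) b c (d : 'I_l) :
  delta_mx a b *m X *m delta_mx c d = X b c *: delta_mx a d.
Proof.
apply/matrixP=> x y; rewrite !mxE (bigD1 c) //= big1 ?addr0 => [|z zc]; last first.
  by rewrite !mxE (negbTE zc) mulr0.
rewrite !mxE eqxx /= (bigD1 b) //= big1 ?addr0 => [|z zb]; last first.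
  by rewrite !mxE (negbTE zb) andbF mul0r.
rewrite !mxE eqxx andbT.
by case: (x == a); case: (y == d); rewrite /= ?mul1r ?mulr1 ?mul0r ?mulr0.
Qed.

Lemma mxtrace_mul_rank1 p (M : 'M[C]_p) (x y : 'cV[C]_p) :
  \tr (M *m (x *m adj y)) = (adj y *m M *m x) 0 0.
Proof. by rewrite mulmxA mxtrace_mulC mulmxA /mxtrace big_ord1. Qed.

Lemma mxtrace_mul_adjE p q (X : 'M[C]_(p, q)) :
  \tr (X *m adj X) = \sum_i \sum_j `|X i j| ^+ 2.
Proof.
by apply: eq_bigr => i _; rewrite mxE; apply: eq_bigr => j _; rewrite adjE normCK.
Qed.

Lemma mxtrace_mul_adj_ge0 p q (X : 'M[C]_(p, q)) : 0 <= \tr (X *m adj X).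
Proof.
by rewrite mxtrace_mul_adjE; do 2 apply: sumr_ge0 => ? _; rewrite exprn_ge0.
Qed.

Lemma mxtrace_mul_adj_eq0 p q (X : 'M[C]_(p, q)) : \tr (X *m adj X) = 0 -> X = 0.
Proof.
rewrite mxtrace_mul_adjE => /eqP; rewrite psumr_eq0 => [/allP rows0|i _]; last first.
  by apply: sumr_ge0 => j _; rewrite exprn_ge0.
apply/matrixP=> i j; move/implyP/(_ isT): (rows0 i (mem_index_enum _)).
rewrite psumr_eq0 => [/allP/(_ j (mem_index_enum _))/implyP/(_ isT)|k _].
  by rewrite expf_eq0 /= normr_eq0 mxE => /eqP.
by rewrite exprn_ge0.
Qed.

Lemma rank_mul_adj p q (X : 'M[C]_(p, q)) : \rank (X *m adj X) = \rank X.
Proof.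
rewrite -[RHS](mxrank_mul_ker X (adj X)).
suff -> : (X :&: kermx (adj X))%MS = 0 by rewrite mxrank0 addn0.
apply/eqP; rewrite -submx0; apply/rV_subP => y.
rewrite sub_capmx => /andP[/submxP[D ->] /sub_kermxP XXD0].
rewrite submx0; apply/eqP/mxtrace_mul_adj_eq0.
by rewrite adjM mulmxA XXD0 mul0mx mxtrace0.
Qed.

(* Compare Z with its orthogonal projection c P onto its row space, c = tr Z / rk Z. *)
Lemma normC_mxtrace_le_rank b (Z : 'M[C]_b) :
  `|\tr Z| ^+ 2 <= (\rank Z)%:R * \tr (Z *m adj Z).
Proof.
have [/eqP|rpos] := posnP (\rank Z).
  by rewrite mxrank_eq0 => /eqP ->; rewrite mxrank0 mxtrace0 normr0 expr0n mul0r.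
set r := \rank Z in rpos *; set t := \tr Z.
pose Q := schmidt (row_base Z); pose P := adj Q *m Q.
have QQ : Q *m adj Q = 1%:M.
  by rewrite -tstar_adj; apply/unitarymxP/schmidt_unitarymx/rank_leq_col.
have /submxP[D ZDQ] : (Z <= Q)%MS.
  by apply: submx_trans (schmidt_sub _); rewrite eq_row_base.
have ZP : Z *m P = Z by rewrite ZDQ /P mulmxA -(mulmxA D) QQ mulmx1.
have adjP : adj P = P by rewrite /P adjM adjK.
have PZ : P *m adj Z = adj Z by rewrite -adjP -adjM ZP.
have PP : P *m P = P by rewrite /P mulmxA -(mulmxA (adj Q)) QQ mulmx1.
have trP : \tr P = r%:R by rewrite /P mxtrace_mulC QQ mxtrace1.
have r0 : (r%:R : C) != 0 by rewrite pnatr_eq0 -lt0n.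
pose c := t / r%:R.
have cc : c^* = t^* / r%:R by rewrite /c rmorphM rmorphV ?unitfE // rmorph_nat.
have := mxtrace_mul_adj_ge0 (Z - c *: P).
have -> : \tr ((Z - c *: P) *m adj (Z - c *: P)) = \tr (Z *m adj Z) - t * t^* / r%:R.
  rewrite adjB adj_scale adjP mulmxBl !mulmxBr -!scalemxAl -!scalemxAr.
  rewrite ZP PZ PP !raddfB /= !mxtraceZ trP mxtrace_adj -/t cc /c.
  by field.
by rewrite subr_ge0 ler_pdivrMr ?ltr0n // normCK [X in _ <= X]mulrC.
Qed.

Lemma inv_rank_mxtrace_le b (Z : 'M[C]_b) k : (\rank Z <= k)%N ->
  (k%:R)^-1 * `|\tr Z| ^+ 2 <= \tr (Z *m adj Z).
Proof.
move=> rk_le; have [->|kpos] := posnP k.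
  by rewrite invr0 mul0r mxtrace_mul_adj_ge0.
rewrite ler_pdivrMl ?ltr0n // (le_trans (normC_mxtrace_le_rank Z)) //.
by rewrite ler_wpM2r ?mxtrace_mul_adj_ge0 ?ler_nat.
Qed.

End Adjoint.

Section PositiveSemidefinite.
Variable C : numClosedFieldType.

Lemma psd0 p : psd (0 : 'M[C]_p).
Proof.
split=> [|x]; last by rewrite mulmx0 mul0mx mxE.
by apply/matrixP=> i j; rewrite adjE !mxE conjC0.
Qed.

Lemma psdD p (A B : 'M[C]_p) : psd A -> psd B -> psd (A + B).
Proof.
move=> [adjA qA] [adjB qB]; split; first by rewrite adjD adjA adjB.
by move=> x; rewrite mulmxDr mulmxDl mxE addr_ge0.
Qed.

Lemma psd_sum p k (F : 'I_k -> 'M[C]_p) : (forall i, psd (F i)) -> psd (\sum_i F i).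
Proof. by move=> psdF; elim/big_ind: _ => //; [exact: psd0 | exact: psdD]. Qed.

Lemma loewner_ge_sum p k (F G : 'I_k -> 'M[C]_p) :
  (forall i, loewner_ge (F i) (G i)) -> loewner_ge (\sum_i F i) (\sum_i G i).
Proof. by move=> FG; rewrite /loewner_ge -sumrB; apply: psd_sum. Qed.

Lemma quad_form_rank1 p (x y : 'cV[C]_p) c :
  (adj y *m (c *: (x *m adj x)) *m y) 0 0 = c * `|(adj x *m y) 0 0| ^+ 2.
Proof.
rewrite -scalemxAr -scalemxAl mxE; congr (_ * _).
rewrite normCKC mulmxA -(mulmxA _ (adj x)) [in LHS]mxE big_ord1; congr (_ * _).
rewrite !mxE rmorph_sum; apply: eq_bigr => i _.
by rewrite !adjE rmorphM /= conjCK mulrC.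
Qed.

Lemma psd_scale_rank1 p (x : 'cV[C]_p) c : 0 <= c -> psd (c *: (x *m adj x)).
Proof.
move=> c_ge0; split; first by rewrite adj_scale adjM adjK geC0_conj.
by move=> y; rewrite quad_form_rank1 mulr_ge0 ?exprn_ge0.
Qed.

(* The spectral theorem, with the eigenvalues read off as quadratic forms. *)
Lemma psd_factor p (A : 'M[C]_p) : psd A -> exists R : 'M[C]_p, A = R *m adj R.
Proof.
move=> [adjA qA].
have /orthomx_spectralP : A \is normalmx by apply/normalmxP; rewrite tstar_adj adjA.
set U := spectralmx A; set d := spectral_diag A.
have Uunitary : U \is unitarymx by exact: spectral_unitarymx.
rewrite invmx_unitary // tstar_adj => AUdU.
have UU : U *m adj U = 1%:M by rewrite -tstar_adj; apply/unitarymxP.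
have d_ge0 i : 0 <= d 0 i.
  have := qA (adj U *m delta_mx i 0).
  rewrite adjM adjK AUdU !mulmxA -(mulmxA _ U) UU mulmx1.
  rewrite -(mulmxA _ U (adj U)) UU mulmx1 adj_delta.
  by rewrite -rowE row_diag_mx -scalemxAl mul_delta_mx !mxE !eqxx mulr1.
exists (adj U *m diag_mx (map_mx sqrtC d)).
rewrite adjM adjK mulmxA -(mulmxA _ (diag_mx _)) AUdU; congr (_ *m _ *m _).
apply/matrixP=> i j; rewrite mul_diag_mx mxE adjE !mxE.
have [<-|nij] := eqVneq i j; last by rewrite !mulr0n rmorph0 mulr0.
by rewrite !mulr1n geC0_conj ?sqrtC_ge0 ?d_ge0 // -expr2 sqrtCK.
Qed.

End PositiveSemidefinite.

Section KroneckerVec.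
Variable C : numClosedFieldType.

Lemma mxvec_index_eq m n (i i' : 'I_m) (j j' : 'I_n) :
  (mxvec_index i j == mxvec_index i' j') = (i == i') && (j == j').
Proof.
apply/eqP/andP => [|[/eqP-> /eqP->]//].
by move/cast_ord_inj/enum_rank_inj => [-> ->].
Qed.

Lemma kronE p1 q1 p2 q2 (A : 'M[C]_(p1, q1)) (B : 'M[C]_(p2, q2)) i1 i2 j1 j2 :
  kron A B (mxvec_index i1 i2) (mxvec_index j1 j2) = A i1 j1 * B i2 j2.
Proof.
rewrite /kron summxE.
under eq_bigr do rewrite summxE; under eq_bigr do under eq_bigr do rewrite summxE.
under eq_bigr do under eq_bigr do under eq_bigr do rewrite summxE.
under eq_bigr do under eq_bigr do under eq_bigr do under eq_bigr do
  rewrite !mxE !mxvec_index_eq.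
rewrite (bigD1 i1) //= [X in _ + X]big1 ?addr0 => [|k /negbTE nk]; last first.
  by do 3 (rewrite big1 // => ? _); rewrite (eq_sym _ k) nk mulr0.
rewrite (bigD1 j1) //= [X in _ + X]big1 ?addr0 => [|k /negbTE nk]; last first.
  by do 2 (rewrite big1 // => ? _); rewrite (eq_sym _ k) nk andbF mulr0.
rewrite (bigD1 i2) //= [X in _ + X]big1 ?addr0 => [|k /negbTE nk]; last first.
  by rewrite big1 // => ? _; rewrite (eq_sym _ k) nk andbF mulr0.
rewrite (bigD1 j2) //= [X in _ + X]big1 ?addr0 => [|k /negbTE nk]; last first.
  by rewrite (eq_sym _ k) nk !andbF mulr0.
by rewrite !eqxx mulr1.
Qed.

Lemma kron_adj p1 q1 p2 q2 (A : 'M[C]_(p1, q1)) (B : 'M[C]_(p2, q2)) :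
  adj (kron A B) = kron (adj A) (adj B).
Proof.
apply/matrixP=> x y; case/mxvec_indexP: x => i1 i2; case/mxvec_indexP: y => j1 j2.
by rewrite adjE !kronE !adjE rmorphM.
Qed.

Lemma sum_mxvec_index m n (F : 'I_(m * n) -> C) :
  \sum_k F k = \sum_i \sum_j F (mxvec_index i j).
Proof.
rewrite pair_big /= (reindex (uncurry (@mxvec_index m n))) /=.
  by apply: eq_bigr => -[i j].
have [g h1 h2] := curry_mxvec_bij m n.
by apply: onW_bij; exists g => x; [apply: h1 | apply: h2].
Qed.

Lemma vecE n m (X : 'M[C]_(n, m)) i j : vec X (mxvec_index j i) 0 = X i j.
Proof. by rewrite /vec mxE mxvecE mxE. Qed.

Lemma vec_invE n m (v : 'cV[C]_(m * n)) i j : vec_inv v i j = v (mxvec_index j i) 0.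
Proof. by rewrite /vec_inv !mxE. Qed.

Lemma vec_invK n m (v : 'cV[C]_(m * n)) : vec (vec_inv v) = v.
Proof.
apply/matrixP=> k z; rewrite ord1; case/mxvec_indexP: k => j i.
by rewrite vecE vec_invE.
Qed.

Lemma vec_inv_sum n m N (c : 'I_N -> C) (v : 'I_N -> 'cV[C]_(m * n)) :
  vec_inv (\sum_i c i *: v i) = \sum_i c i *: vec_inv (v i) :> 'M_(n, m).
Proof.
apply/matrixP=> i j; rewrite vec_invE !summxE; apply: eq_bigr => k _.
by rewrite !mxE.
Qed.

Lemma kron_mul_vec p1 q1 p2 q2 (F : 'M[C]_(p1, q1)) (G : 'M[C]_(p2, q2))
    (X : 'M[C]_(q2, q1)) :
  kron F G *m vec X = vec (G *m X *m F^T).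
Proof.
apply/matrixP=> k z; rewrite ord1; case/mxvec_indexP: k => i1 i2.
rewrite vecE !mxE sum_mxvec_index; apply: eq_bigr => j1 _.
rewrite [in RHS]mxE mulr_suml; apply: eq_bigr => j2 _.
by rewrite kronE vecE !mxE [RHS]mulrC mulrA.
Qed.

Lemma adj_vec_mul_vec n m (X Y : 'M[C]_(n, m)) :
  (adj (vec X) *m vec Y) 0 0 = \tr (Y *m adj X).
Proof.
rewrite mxE sum_mxvec_index /mxtrace exchange_big /=; apply: eq_bigr => i _.
by rewrite mxE; apply: eq_bigr => j _; rewrite !adjE !vecE mulrC.
Qed.

End KroneckerVec.

Definition sandwich (C : numClosedFieldType) m n b1 b2
    (F : 'M[C]_(m, b1)) (G : 'M[C]_(n, b2)) (w : 'cV[C]_(m * n)) : 'M[C]_(b2, b1) :=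
  adj G *m vec_inv w *m map_mx Num.conj F.

Section Sandwich.
Variable C : numClosedFieldType.

Lemma kron_gram_quad_form m n b1 b2 (F : 'M[C]_(m, b1)) (G : 'M[C]_(n, b2)) w :
  (adj w *m kron (F *m adj F) (G *m adj G) *m w) 0 0 =
  \tr (sandwich F G w *m adj (sandwich F G w)).
Proof.
rewrite -[X in _ *m X]vec_invK -mulmxA kron_mul_vec -[X in adj X]vec_invK.
rewrite adj_vec_mul_vec !adjM adj_map_conj adjK trmx_mul trmx_adj.
by rewrite -!mulmxA mxtrace_mulC -!mulmxA.
Qed.

Lemma rank_sandwich_le m n b (A : 'M[C]_(m, b)) (B : 'M[C]_(n, b)) w r :
  (\rank (vec_inv w) <= r)%N ->
  (\rank (sandwich A B w) <= minn (\rank (A *m adj A)) (minn (\rank (B *m adj B)) r))%N.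
Proof.
move=> rk_w; rewrite !rank_mul_adj !leq_min; apply/and3P; split.
- by rewrite (leq_trans (mxrankM_maxr _ _)) ?mxrank_map.
- rewrite (leq_trans (mxrankM_maxl _ _)) // (leq_trans (mxrankM_maxl _ _)) //.
  by rewrite /adj mxrank_tr mxrank_map.
- by rewrite (leq_trans (mxrankM_maxl _ _)) // (leq_trans (mxrankM_maxr _ _)).
Qed.

Lemma rho_mul m n N b (v : 'I_N -> 'cV[C]_(m * n)) (A : 'M[C]_(m, b))
    (B : 'M[C]_(n, b)) (u : 'cV[C]_N) :
  (adj (rho v A B) *m u) 0 0 = \tr (sandwich A B (\sum_j u j 0 *: v j)).
Proof.
have -> : (adj (rho v A B) *m u) 0 0 =
    (adj (vec (B *m A^T)) *m (\sum_j u j 0 *: v j)) 0 0.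
  rewrite mxE mulmx_sumr summxE; apply: eq_bigr => j _.
  rewrite -scalemxAr !mxE rmorph_sum mulrC; congr (_ * _).
  by apply: eq_bigr => k _; rewrite !adjE rmorphM /= conjCK mulrC.
rewrite -[X in _ *m X]vec_invK adj_vec_mul_vec adjM adj_trmx.
by rewrite mulmxA mxtrace_mulC mulmxA.
Qed.

End Sandwich.

Section StarProduct.
Variables (C : numClosedFieldType) (m n N : nat).
Implicit Types (Y : 'M[C]_(N * (m * n))) (P : 'M[C]_m) (Q : 'M[C]_n) (u : 'cV[C]_N).

Lemma blockP Y Y' : (forall i j, block Y i j = block Y' i j) -> Y = Y'.
Proof.
move=> eqYY'; apply/matrixP=> x y.
case/mxvec_indexP: x => i p; case/mxvec_indexP: y => j q.
by move/matrixP/(_ p q): (eqYY' i j); rewrite !mxE.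
Qed.

Lemma block_adj Y i j : block (adj Y) i j = adj (block Y j i).
Proof. by apply/matrixP=> p q; rewrite mxE !adjE mxE. Qed.

Lemma starY_adj Y P Q :
  adj Y = Y -> adj P = P -> adj Q = Q -> adj (starY Y P Q) = starY Y P Q.
Proof.
move=> adjY adjP adjQ; apply/matrixP=> i j; rewrite adjE !mxE.
by rewrite -mxtrace_adj adjM adjK kron_adj adjP adjQ mxtrace_mulC -block_adj adjY.
Qed.

Lemma starY_sum K (F : 'I_K -> 'M[C]_(N * (m * n))) P Q :
  starY (\sum_t F t) P Q = \sum_t starY (F t) P Q.
Proof.
apply/matrixP=> i j; rewrite summxE mxE.
have -> : block (\sum_t F t) i j = \sum_t block (F t) i j.
  by apply/matrixP=> p q; rewrite !mxE !summxE; apply: eq_bigr => t _; rewrite mxE.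
rewrite adj_sum mulmx_sumr raddf_sum.
by apply: eq_bigr => t _; rewrite mxE.
Qed.

Lemma quad_form_sum p K (M : 'M[C]_p) (c : 'I_K -> C) (a : 'I_K -> 'cV[C]_p) :
  (adj (\sum_j c j *: a j) *m M *m (\sum_j c j *: a j)) 0 0 =
  \sum_i \sum_j (c i)^* * c j * (adj (a i) *m M *m a j) 0 0.
Proof.
rewrite adj_sum mulmx_suml mulmx_suml summxE; apply: eq_bigr => i _.
rewrite mulmx_sumr summxE; apply: eq_bigr => j _.
by rewrite adj_scale -!scalemxAl -scalemxAr !mxE mulrA.
Qed.

Lemma starY_gram_quad_form T Y (L : 'I_T -> 'I_N -> 'cV[C]_(m * n)) P Q u :
  (forall i j, block Y i j = \sum_t L t i *m adj (L t j)) ->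
  (adj u *m starY Y P Q *m u) 0 0 =
  \sum_t (adj (\sum_j u j 0 *: L t j) *m kron P Q *m (\sum_j u j 0 *: L t j)) 0 0.
Proof.
move=> YL.
have starE i j : starY Y P Q i j = \sum_t (adj (L t i) *m kron P Q *m L t j) 0 0.
  rewrite mxE YL adj_sum mulmx_sumr raddf_sum; apply: eq_bigr => t _.
  by rewrite adjM adjK; apply: mxtrace_mul_rank1.
under eq_bigr do rewrite quad_form_sum.
rewrite exchange_big /=; under eq_bigr do rewrite exchange_big /=.
rewrite exchange_big /= mxE; apply: eq_bigr => j _.
rewrite mxE mulr_suml; apply: eq_bigr => i _.
rewrite mxE starE !mulr_sumr mulr_suml; apply: eq_bigr => t _.
by rewrite [X in X * _ * _ = _]mxE -mulrA [X in _ * X = _]mulrC mulrA.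
Qed.

Lemma psd_starY Y P Q : psd Y -> psd P -> psd Q -> psd (starY Y P Q).
Proof.
move=> psdY psdP psdQ; split; first exact: starY_adj psdY.1 psdP.1 psdQ.1.
move=> u; have [R YR] := psd_factor psdY.
have [F ->] := psd_factor psdP; have [G ->] := psd_factor psdQ.
pose L t i := \col_p R (mxvec_index i p) t : 'cV[C]_(m * n).
have YL i j : block Y i j = \sum_t L t i *m adj (L t j).
  apply/matrixP=> p q; rewrite mxE YR mxE summxE; apply: eq_bigr => t _.
  by rewrite [RHS]mxE big_ord1 adjE !mxE.
rewrite (starY_gram_quad_form _ _ _ YL); apply: sumr_ge0 => t _.
by rewrite kron_gram_quad_form mxtrace_mul_adj_ge0.
Qed.

End StarProduct.

Lemma coef_ge0 (C : numClosedFieldType) m n b (A : 'M[C]_(m, b)) (B : 'M[C]_(n, b)) r :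
  0 <= coef A B r.
Proof. by rewrite invr_ge0 ler0n. Qed.

Section RankOneStar.
Variables (C : numClosedFieldType) (m n N : nat).
Variables (Y : 'M[C]_(N * (m * n))) (v : 'I_N -> 'cV[C]_(m * n)).
Hypothesis Yv : forall i j, block Y i j = v i *m adj (v j).

Lemma rank1_adj : adj Y = Y.
Proof. by apply: blockP => i j; rewrite block_adj !Yv adjM adjK. Qed.

Lemma rank1_neq0 : Y != 0 -> exists i, v i != 0.
Proof.
move=> Y0; have [i vi0|v0] := pickP (fun i => v i != 0); first by exists i.
case/eqP: Y0; apply: blockP => i j; apply/matrixP => p q.
by move/negbFE/eqP: (v0 i) => vi0; rewrite Yv vi0 mul0mx !mxE.
Qed.

Lemma starY_rank1_quad_form b1 b2 (F : 'M[C]_(m, b1)) (G : 'M[C]_(n, b2))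
    (u : 'cV[C]_N) :
  (adj u *m starY Y (F *m adj F) (G *m adj G) *m u) 0 0 =
  \tr (sandwich F G (\sum_j u j 0 *: v j) *m adj (sandwich F G (\sum_j u j 0 *: v j))).
Proof.
have Yv1 i j : block Y i j = \sum_(t < 1) v i *m adj (v j) by rewrite big_ord1 Yv.
rewrite (starY_gram_quad_form (L := fun _ => v) _ _ u Yv1) big_ord1.
exact: kron_gram_quad_form.
Qed.

Variable r : nat.
Hypothesis rank_span_le :
  forall c : 'I_N -> C, (\rank (\sum_i c i *: vec_inv (v i))%R <= r)%N.

Lemma starY_rank1_ge b (A : 'M[C]_(m, b)) (B : 'M[C]_(n, b)) :
  loewner_ge (starY Y (A *m adj A) (B *m adj B))
    (coef A B r *: (rho v A B *m adj (rho v A B))).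
Proof.
split.
  rewrite adjB adj_scale adjM adjK starY_adj ?rank1_adj ?adjM ?adjK //.
  by rewrite geC0_conj ?coef_ge0.
move=> u; rewrite mulmxBr mulmxBl mxE [(- _ : 'M_1) 0 0]mxE quad_form_rank1.
rewrite starY_rank1_quad_form rho_mul subr_ge0; apply: inv_rank_mxtrace_le.
by apply: rank_sandwich_le; rewrite vec_inv_sum.
Qed.

Lemma starY_rank1_sharp b : (0 < b)%N -> (exists i, v i != 0) ->
  exists (A : 'M[C]_(m, b)) (B : 'M[C]_(n, b)) (u : 'cV[C]_N),
    [/\ A != 0, B != 0, (adj (rho v A B) *m u) 0 0 != 0 &
        (adj u *m starY Y (A *m adj A) (B *m adj B) *m u) 0 0
          = coef A B r * `|(adj (rho v A B) *m u) 0 0| ^+ 2].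
Proof.
move=> b_gt0 [i vi0]; set W := vec_inv (v i).
have W0 : W != 0.
  apply: contraNneq vi0 => W_eq0.
  by rewrite -[v i]vec_invK -/W W_eq0 /vec !trmx0 linear0 trmx0.
have /matrix0Pn[q [p Wqp0]] := W0.
pose l := Ordinal b_gt0.
pose A : 'M[C]_(m, b) := delta_mx p l; pose B : 'M[C]_(n, b) := delta_mx q l.
pose u : 'cV[C]_N := delta_mx i 0.
have uv : \sum_j u j 0 *: v j = v i.
  rewrite (bigD1 i) //= big1 ?addr0 => [|j ji]; first by rewrite mxE !eqxx scale1r.
  by rewrite mxE (negbTE ji) scale0r.
have ZW : sandwich A B (v i) = W q p *: delta_mx l l.
  by rewrite /sandwich adj_delta map_conj_delta delta_mx_sandwich.
have r_gt0 : (0 < r)%N.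
  have := rank_span_le (fun j => (j == i)%:R).
  rewrite (bigD1 i) //= big1 ?addr0 => [|j /negbTE->]; last by rewrite scale0r.
  rewrite eqxx scale1r -/W; apply: leq_trans.
  by rewrite lt0n mxrank_eq0.
have coef1 : coef A B r = 1.
  by rewrite /coef !rank_mul_adj !mxrank_delta (minn_idPl r_gt0) minnn invr1.
have trl : \tr (delta_mx l l : 'M[C]_b) = 1.
  rewrite /mxtrace (bigD1 l) //= big1 ?addr0 => [|j jl]; first by rewrite mxE !eqxx.
  by rewrite mxE (negbTE jl).
exists A, B, u; rewrite starY_rank1_quad_form rho_mul uv ZW coef1 mul1r mxtraceZ trl.
split; rewrite ?mulr1 -?mxrank_eq0 ?mxrank_delta //.
rewrite adj_scale -scalemxAl -scalemxAr scalerA adj_delta mul_delta_mx mxtraceZ trl.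
by rewrite mulr1 normCK.
Qed.

End RankOneStar.

Unset Implicit Arguments.

Theorem theoremA (C : numClosedFieldType) (m n N alpha : nat)
  (Y : 'M[C]_(N * (m * n))) :
  (0 < m)%N -> (0 < n)%N -> (0 < N)%N -> (0 < alpha)%N ->
  psd Y -> \rank Y = alpha ->
  (* (a) *)
  (forall (P : 'M[C]_m) (Q : 'M[C]_n), psd P -> psd Q -> psd (starY Y P Q)) /\
  (* (b) and (c), for every rank-one psd decomposition of Y *)
  (forall (Yk : 'I_alpha -> 'M[C]_(N * (m * n)))
          (v : 'I_alpha -> 'I_N -> 'cV[C]_(m * n))
          (r : 'I_alpha -> nat),
     (forall k, psd (Yk k) /\ \rank (Yk k) = 1%N) ->
     Y = \sum_(k < alpha) Yk k ->
     (forall k i j, block (Yk k) i j = v k i *m adj (v k j)) ->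
     (forall k, is_max_rank_span (fun i => vec_inv (v k i)) (r k)) ->
     (* (b) *)
     (forall (b : nat), (0 < b)%N ->
        forall (A : 'M[C]_(m, b)) (B : 'M[C]_(n, b)), A != 0 -> B != 0 ->
          loewner_ge (starY Y (A *m adj A) (B *m adj B))
            (\sum_(k < alpha) coef A B (r k) *: (rho (v k) A B *m adj (rho (v k) A B)))
          /\ psd (\sum_(k < alpha) coef A B (r k) *: (rho (v k) A B *m adj (rho (v k) A B)))
          /\ (forall k, loewner_ge (starY (Yk k) (A *m adj A) (B *m adj B))
                          (coef A B (r k) *: (rho (v k) A B *m adj (rho (v k) A B))))) /\
     (* (c) *)
     (forall (k : 'I_alpha) (b : nat), (0 < b)%N ->
        exists (A : 'M[C]_(m, b)) (B : 'M[C]_(n, b)) (u : 'cV[C]_N),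
          [/\ A != 0, B != 0, (adj (rho (v k) A B) *m u) 0 0 != 0 &
              (adj u *m starY (Yk k) (A *m adj A) (B *m adj B) *m u) 0 0
                = coef A B (r k) * `|(adj (rho (v k) A B) *m u) 0 0| ^+ 2])).
Proof.
move=> _ _ _ _ psdY _; split=> [P Q|Yk v r Yk_rank1 ->{Y psdY} Ykv r_max].
  exact: psd_starY.
split=> [b _ A B _ _ | k b b_gt0].
  have Yk_ge k := starY_rank1_ge (Ykv k) (r_max k).2 A B.
  split; first by rewrite starY_sum; apply: loewner_ge_sum.
  by split=> //; apply: psd_sum => k; apply/psd_scale_rank1/coef_ge0.
apply: starY_rank1_sharp (Ykv k) _ (r_max k).2 _ b_gt0 _.
by apply: rank1_neq0 (Ykv k) _; rewrite -mxrank_eq0 (Yk_rank1 k).2.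
Qed.
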